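(* For all $\varepsilon>0$ and $A,r\in\mathbb{N}$ there exist $\delta>0$ and $N\in\mathbb{N}$ such that the following holds. Let $n_1,\ldots,n_r$ be positive integers with $n_i\leq An_j$ for all $i,j$ and $n=n_1+\cdots+n_r\geq N$; let $\Lambda=(\lambda_{i,j})$ be a symmetric non-negative $r\times r$ matrix that is connected and $\varepsilon$-separated; let $p_{i,j}=\lambda_{i,j}/\sqrt{n_in_j}$, $P=(p_{i,j})$, $M_{i,j}=p_{i,j}n_j$, and suppose $\rho(M)\geq 1+\varepsilon$. Then for all $i\in[r]$, $\Pr[\mathrm{GW}(\vec n,P,e_i)\text{ goes extinct}]\leq 1-\delta$.
   Context: $\mathrm{GW}(\vec n,P,x)$, for $x\in\mathbb{N}^r$, is the multi-type Galton–Watson process started with $x(i)$ individuals of type $i$, in which each individual of type $i$ independently has, for each $j\in[r]$, an independent $\mathrm{Binomial}(n_j,p_{i,j})$ number of children of type $j$. It goes extinct if its total population is finite. $e_i$ is the $i$-th standard basis vector. $\rho(M)$ is the largest eigenvalue of $M$. $\Lambda$ is $\varepsilon$-separated if for all $i,j$ either $\lambda_{i,j}=0$ or $\varepsilon\leq\lambda_{i,j}\leq 1/\varepsilon$; connected if the graph on $[r]$ with edges $\{i,j\}$ for $\lambda_{i,j}>0$ is connected. *)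

From HB Require Import structures.
From mathcomp Require Import all_boot all_order all_algebra.
From mathcomp Require Import all_classical all_reals all_analysis.
Set Implicit Arguments. Unset Strict Implicit. Unset Printing Implicit Defensive.
Import Order.TTheory GRing.Theory Num.Theory.
Import numFieldNormedType.Exports.
Local Open Scope ring_scope.

Definition vecN (r : nat) := 'I_r -> nat.

(* Probability mass functions on N^r (with finite support in all uses). *)
Definition massN (R : realType) (r : nat) := vecN r -> R.

Definition dirac_at (R : realType) (r : nat) (x : vecN r) : massN R r :=
  fun y => if [forall j, y j == x j] then 1 else 0.

(* The sum ranges over all u <= y
   componentwise (encoded as finite functions into a large enough ordinal). *)
Definition convN (R : realType) (r : nat) (d1 d2 : massN R r) : massN R r :=
  fun y =>
    \sum_(u : {ffun 'I_r -> 'I_(\max_(j < r) y j)%N.+1} | [forall j, (u j <= y j)%N])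
       d1 (fun j => nat_of_ord (u j)) * d2 (fun j => (y j - u j)%N).

(* Offspring law of one individual of type i: independent Binomial(n_j, p_ij)
   numbers of children of each type j. *)
Definition offspring (R : realType) (r : nat) (n : 'I_r -> nat) (P : 'M[R]_r)
    (i : 'I_r) : massN R r :=
  fun y => \prod_(j < r)
     ('C(n j, y j)%:R * P i j ^+ y j * (1 - P i j) ^+ (n j - y j)%N).

(* Law of the total offspring vector of a population x (x i individuals of
   type i, reproducing independently). *)
Definition children (R : realType) (r : nat) (n : 'I_r -> nat) (P : 'M[R]_r)
    (x : vecN r) : massN R r :=
  foldr (fun i d => iter (x i) (convN (offspring n P i)) d)
        (dirac_at R (fun _ => 0%N)) (enum 'I_r).

(* An a-priori bound on each coordinate of the children vector of x. *)
Definition child_bound (r : nat) (n : 'I_r -> nat) (x : vecN r) : nat :=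
  (\sum_(i < r) x i * \max_(j < r) n j)%N.

(* gw_law n P t x y = Pr[ Z_t = y ] where (Z_t) is GW(n,P,x), the multi-type
   Galton--Watson process started from Z_0 = x (Markov chain, first-step
   decomposition). *)
Fixpoint gw_law (R : realType) (r : nat) (n : 'I_r -> nat) (P : 'M[R]_r)
    (t : nat) : vecN r -> massN R r :=
  match t with
  | 0 => fun x => dirac_at R x
  | t'.+1 => fun x y =>
      \sum_(z : {ffun 'I_r -> 'I_(child_bound n x).+1})
        children n P x (fun j => nat_of_ord (z j))
        * gw_law n P t' (fun j => nat_of_ord (z j)) y
  end.

(* Probability that GW(n,P,x) goes extinct (total population finite, i.e.
   some generation is empty): the limit of Pr[Z_t = 0] as t -> oo. *)
Definition gw_extinction_prob (R : realType) (r : nat) (n : 'I_r -> nat)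
    (P : 'M[R]_r) (x : vecN r) : R :=
  limn (fun t : nat => gw_law n P t x (fun _ => 0%N)).

Definition unit_vecN (r : nat) (i : 'I_r) : vecN r := fun j => nat_of_bool (j == i).

Definition eps_separated (R : realType) (r : nat) (eps : R) (L : 'M[R]_r) : Prop :=
  forall i j, L i j = 0 \/ (eps <= L i j /\ L i j <= eps^-1).

Definition mx_connected (R : realType) (r : nat) (L : 'M[R]_r) : Prop :=
  forall i j : 'I_r, connect (fun a b => 0 < L a b) i j.

Definition Pmx (R : realType) (r : nat) (n : 'I_r -> nat) (L : 'M[R]_r) : 'M[R]_r :=
  \matrix_(i, j) (L i j / Num.sqrt ((n i * n j)%N%:R)).

Definition Mmx (R : realType) (r : nat) (n : 'I_r -> nat) (P : 'M[R]_r) : 'M[R]_r :=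
  \matrix_(i, j) (P i j * (n j)%:R).

(* Write F_i(s) = prod_j (1 - p_ij + p_ij s_j)^(n_j) for the offspring generating
   function. If s >= 0 and F(s) <= s coordinatewise, the first-step decomposition and
   induction on t bound Pr[Z_t = 0 | Z_0 = x] by prod_i s_i^(x_i), hence also the
   extinction probability.
   Symmetry of lambda gives n_a M_ab = n_b M_ba, so an eigenvector of M for
   mu >= 1 + eps yields a nonnegative w with M w >= mu w. On the edges of lambda the
   entries of M lie in [eps/(A+1), (A+1)/eps], so by connectivity the smoothed vector
   (I + M)^r w, once normalised, is some U with 0 <= U <= 1, M U >= mu U and
   U >= c^r for a constant c depending only on eps, A and r. For s = 1 - th U with
   th = eps/(1+eps), the bound 1 - y <= exp(-y) gives
   F_i(s) <= exp(-mu th U_i) <= 1 - th U_i, so delta = th c^r works. The bound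
   n >= N only serves to make every p_ij at most 1. *)

From Pilot Require Import Defs.
From HB Require Import structures.
From mathcomp Require Import all_boot all_order all_algebra.
From mathcomp Require Import all_classical all_reals all_analysis.
From mathcomp Require Import ring lra zify.
Import Order.TTheory GRing.Theory Num.Theory.
Import numFieldNormedType.Exports.
Local Open Scope ring_scope.
Set Implicit Arguments. Unset Strict Implicit. Unset Printing Implicit Defensive.

Section GeneratingFunction.
Variables (R : realType) (r : nat) (s : 'I_r -> R).

Definition vec_of_ffun K (u : {ffun 'I_r -> 'I_K}) : vecN r := fun j => nat_of_ord (u j).

Definition monomial (y : vecN r) : R := \prod_j s j ^+ y j.

(* The generating function of d at s, truncated to the box [0, K)^r (exact when d
   is supported there). *)
Definition box_pgf K (d : massN R r) : R :=
  \sum_(u : {ffun 'I_r -> 'I_K}) d (vec_of_ffun u) * monomial (vec_of_ffun u).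

Definition supp_le (d : massN R r) (b : vecN r) :=
  forall y, d y != 0 -> forall j, (y j <= b j)%N.

Definition offspring_pgf (n : 'I_r -> nat) (P : 'M[R]_r) (i : 'I_r) : R :=
  \prod_j (1 - P i j + P i j * s j) ^+ n j.

Lemma monomialD (a b : vecN r) :
  monomial (fun j => (a j + b j)%N) = monomial a * monomial b.
Proof. by rewrite /monomial -big_split; apply: eq_bigr => j _; rewrite exprD. Qed.

Lemma sum_box_widen (K1 K2 : nat) (F : vecN r -> R) (Q : vecN r -> bool) :
  (K1.+1 <= K2)%N -> (forall y, Q y -> forall j, (y j < K1.+1)%N) ->
  \sum_(u : {ffun 'I_r -> 'I_K1.+1} | Q (vec_of_ffun u)) F (vec_of_ffun u)
  = \sum_(u : {ffun 'I_r -> 'I_K2} | Q (vec_of_ffun u)) F (vec_of_ffun u).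
Proof.
move=> le12 hQ.
pose h (u : {ffun 'I_r -> 'I_K1.+1}) := [ffun j => widen_ord le12 (u j)].
pose h' (v : {ffun 'I_r -> 'I_K2}) := [ffun j => (inord (v j) : 'I_K1.+1)].
have vec_h u : vec_of_ffun (h u) = vec_of_ffun u.
  by apply: funext => j; rewrite /vec_of_ffun ffunE.
rewrite (reindex_onto h h'); last first.
  move=> v Qv; apply/ffunP => j; rewrite !ffunE; apply: val_inj => /=.
  by rewrite inordK //; apply: hQ Qv j.
apply: eq_big => [u|u _]; last by rewrite vec_h.
have -> : h' (h u) == u.
  by apply/eqP/ffunP => j; rewrite !ffunE; apply: val_inj; rewrite /= inordK.
by rewrite vec_h andbT.
Qed.

(* Qualified because [convN] alone refers to mathcomp.analysis.convex.convN. *)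
Lemma convN_box k (v : {ffun 'I_r -> 'I_k.+1}) (a d : massN R r) :
  Defs.convN a d (vec_of_ffun v) =
  \sum_(u : {ffun 'I_r -> 'I_k.+1} | [forall j, (vec_of_ffun u j <= vec_of_ffun v j)%N])
     a (vec_of_ffun u) * d (fun j => (vec_of_ffun v j - vec_of_ffun u j)%N).
Proof.
rewrite /Defs.convN; apply: (@sum_box_widen (\max_(j < r) vec_of_ffun v j)%N k.+1
  (fun u => a u * d (fun j => (vec_of_ffun v j - u j)%N))
  (fun u => [forall j, (u j <= vec_of_ffun v j)%N])).
  by rewrite ltnS; apply/bigmax_leqP => j _; rewrite -ltnS ltn_ord.
move=> y /forallP hy j; rewrite ltnS; apply: leq_trans (hy j) _.
exact: (leq_bigmax_cond (F := fun j => vec_of_ffun v j) j).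
Qed.

Lemma sum_box_shift k (u : {ffun 'I_r -> 'I_k.+1}) (F : vecN r -> R) (b : vecN r) :
  (forall y, F y != 0 -> forall j, (y j <= b j)%N) ->
  (forall j, (u j + b j <= k)%N) ->
  \sum_(v : {ffun 'I_r -> 'I_k.+1} | [forall j, (vec_of_ffun u j <= vec_of_ffun v j)%N])
      F (fun j => (vec_of_ffun v j - vec_of_ffun u j)%N)
  = \sum_(w : {ffun 'I_r -> 'I_k.+1}) F (vec_of_ffun w).
Proof.
move=> hF hub.
pose h (w : {ffun 'I_r -> 'I_k.+1}) := [ffun j => (inord (u j + w j) : 'I_k.+1)].
pose h' (v : {ffun 'I_r -> 'I_k.+1}) := [ffun j => (inord (v j - u j) : 'I_k.+1)].
have le_k (m : 'I_k.+1) : (m <= k)%N by rewrite -ltnS ltn_ord.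
rewrite (reindex_onto h h'); last first.
  move=> v /forallP uv; apply/ffunP => j; rewrite !ffunE; apply: val_inj => /=.
  rewrite (@inordK k (v j - u j)); last by rewrite ltnS (leq_trans (leq_subr _ _)) ?le_k.
  by rewrite subnKC ?inordK ?ltnS //; apply: uv.
pose fits (w : {ffun 'I_r -> 'I_k.+1}) := [forall j, (u j + w j <= k)%N].
have vec_h w : fits w -> forall j, vec_of_ffun (h w) j = (u j + w j)%N.
  by move=> /forallP fw j; rewrite /vec_of_ffun ffunE inordK // ltnS fw.
rewrite (eq_bigl fits); last first.
  move=> w; apply/idP/idP.
    case/andP=> _ /eqP hw; apply/forallP => j.
    have := congr1 (fun f : {ffun 'I_r -> 'I_k.+1} => val (f j)) hw.
    rewrite /h' /h !ffunE /=.
    case: (leqP (u j + w j) k) => // hgt.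
    rewrite (@inordK k (_ - _)); last by rewrite ltnS (leq_trans (leq_subr _ _)) ?le_k.
    have -> : val (inord (u j + w j) : 'I_k.+1) = 0%N.
      by rewrite /inord /insubd insubN // -leqNgt.
    move=> w0; move: hgt; rewrite -w0 sub0n addn0 => hgt.
    by move: (le_k (u j)); rewrite leqNgt hgt.
  move=> fw; apply/andP; split.
    by apply/forallP => j; rewrite vec_h // leq_addr.
  apply/eqP/ffunP => j; apply: val_inj.
  by rewrite /h' ffunE /= -/(vec_of_ffun (h w) j) vec_h // addKn inordK.
rewrite [RHS](bigID fits) /= [X in _ = _ + X]big1 ?addr0; last first.
  move=> w nfw; apply/eqP; apply: contraNT nfw => /hF Fw.
  by apply/forallP => j; apply: leq_trans (hub j); rewrite leq_add2l Fw.
by apply: eq_bigr => w fw; congr F; apply: funext => j; rewrite vec_h // addKn.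
Qed.

Lemma box_pgf_convN k (a d : massN R r) (ba bd : vecN r) :
  supp_le a ba -> supp_le d bd -> (forall j, (ba j + bd j <= k)%N) ->
  box_pgf k.+1 (Defs.convN a d) = box_pgf k.+1 a * box_pgf k.+1 d.
Proof.
move=> sa sd hb; rewrite /box_pgf.
under eq_bigr => v _ do rewrite convN_box big_distrl /=.
rewrite big_distrl /=.
under eq_bigr => v _ do rewrite big_mkcond /=.
rewrite exchange_big /=; apply: eq_bigr => u _.
rewrite -big_mkcond /= big_distrr /=.
have [a0|an0] := eqVneq (a (vec_of_ffun u)) 0.
  by rewrite a0 big1 ?big1 // => v _; rewrite ?mul0r ?mulr0 ?a0 ?mul0r.
transitivity (\sum_(v : {ffun 'I_r -> 'I_k.+1} |
                    [forall j, (vec_of_ffun u j <= vec_of_ffun v j)%N])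
   a (vec_of_ffun u) * monomial (vec_of_ffun u) *
   (fun y => d y * monomial y) (fun j => (vec_of_ffun v j - vec_of_ffun u j)%N)).
  apply: eq_bigr => v /forallP uv.
  have -> : monomial (vec_of_ffun v) =
      monomial (fun j => (vec_of_ffun u j + (vec_of_ffun v j - vec_of_ffun u j))%N).
    by congr monomial; apply: funext => j; rewrite subnKC.
  by rewrite monomialD /=; ring.
rewrite -big_distrr /= (@sum_box_shift k u (fun y => d y * monomial y) bd).
- by rewrite big_distrr.
- by move=> y; rewrite mulf_eq0 negb_or => /andP[/sd].
- by move=> j; apply: leq_trans (hb j); rewrite leq_add2r; apply: sa an0 j.
Qed.

Lemma supp_le_convN (a d : massN R r) ba bd :
  supp_le a ba -> supp_le d bd -> supp_le (Defs.convN a d) (fun j => (ba j + bd j)%N).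
Proof.
move=> sa sd y hy j.
have [u /forallP uy nz] : exists2 u : {ffun 'I_r -> 'I_(\max_(j < r) y j)%N.+1},
    [forall j, (u j <= y j)%N] & a (vec_of_ffun u) * d (fun j => (y j - u j)%N) != 0.
  apply/exists_inP; apply: contraNT hy; rewrite negb_exists_in => /forallP H.
  rewrite /Defs.convN big1 // => u uy; apply/eqP; have := H u; rewrite uy /=.
  by rewrite negbK.
move: nz; rewrite mulf_eq0 negb_or => /andP[/sa ha /sd hd].
by rewrite -(subnKC (uy j)); apply: leq_add; [apply: ha | apply: hd].
Qed.

Lemma supp_le_dirac0 : supp_le (dirac_at R (fun _ => 0%N)) (fun _ => 0%N).
Proof.
move=> y; rewrite /dirac_at; case: ifP => [/forallP H _ j|]; last by rewrite eqxx.
by rewrite (eqP (H j)).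
Qed.

Lemma supp_le_offspring (n : 'I_r -> nat) (P : 'M[R]_r) i : supp_le (offspring n P i) n.
Proof.
move=> y hy j; rewrite leqNgt; apply/negP => hj; move: hy; rewrite /offspring.
by rewrite (bigD1 j) //= bin_small // !mul0r eqxx.
Qed.

Lemma box_pgf_dirac0 k : box_pgf k.+1 (dirac_at R (fun _ => 0%N)) = 1.
Proof.
have vec0 : vec_of_ffun [ffun _ => (ord0 : 'I_k.+1)] = fun _ => 0%N.
  by apply: funext => j; rewrite /vec_of_ffun ffunE.
rewrite /box_pgf (bigD1 [ffun _ => ord0]) //= big1 ?addr0.
  rewrite vec0 /dirac_at /monomial; case: ifPn => [_|/forallPn[j]]; last by rewrite eqxx.
  by rewrite mul1r big1 // => j _; rewrite expr0.
move=> u hu; rewrite /dirac_at; case: ifP; last by rewrite mul0r.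
move/forallP => H; case/eqP: hu; apply/ffunP => j; rewrite ffunE; apply: val_inj.
by have := eqP (H j); rewrite /vec_of_ffun /= => ->.
Qed.

Lemma box_pgf_offspring k (n : 'I_r -> nat) (P : 'M[R]_r) i : (forall j, (n j <= k)%N) ->
  box_pgf k.+1 (offspring n P i) = offspring_pgf n P i.
Proof.
move=> hn.
pose g j (m : 'I_k.+1) :=
  'C(n j, m)%:R * P i j ^+ m * (1 - P i j) ^+ (n j - m)%N * s j ^+ m.
have binomial_g j : (1 - P i j + P i j * s j) ^+ n j = \sum_m g j m.
  rewrite exprDn (big_ord_widen k.+1
    (fun m : nat => (1 - P i j) ^+ (n j - m) * (P i j * s j) ^+ m *+ 'C(n j, m))) ?ltnS //.
  rewrite big_mkcond /=; apply: eq_bigr => m _; rewrite /g.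
  case: ifP => hm; last by rewrite bin_small ?mul0r // ltnNge -ltnS hm.
  by rewrite exprMn -mulr_natl; ring.
rewrite /offspring_pgf; under eq_bigr => j _ do rewrite binomial_g.
rewrite bigA_distr_bigA /box_pgf; apply: eq_bigr => f _.
by rewrite /offspring /monomial -big_split.
Qed.

Lemma iter_convN_offspring (n : 'I_r -> nat) (P : 'M[R]_r) i (d : massN R r) b m :
  supp_le d b ->
  supp_le (iter m (Defs.convN (offspring n P i)) d) (fun j => (b j + m * n j)%N) /\
  (forall k, (forall j, (b j + m * n j <= k)%N) ->
    box_pgf k.+1 (iter m (Defs.convN (offspring n P i)) d)
    = box_pgf k.+1 (offspring n P i) ^+ m * box_pgf k.+1 d).
Proof.
move=> sd; elim: m => [|m [IHs IHp]] /=.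
  split; first by move=> y hy j; rewrite mul0n addn0; apply: sd.
  by move=> k _; rewrite expr0 mul1r.
split.
  move=> y hy j; have := supp_le_convN (@supp_le_offspring n P i) IHs hy j.
  by rewrite mulSn addnCA.
move=> k hk.
rewrite (box_pgf_convN (@supp_le_offspring n P i) IHs); last first.
  by move=> j; rewrite addnCA -mulSn; apply: hk.
rewrite IHp ?exprS ?mulrA // => j; apply: leq_trans (hk j).
by rewrite leq_add2l mulSn leq_addl.
Qed.

Lemma foldr_convN_offspring (n : 'I_r -> nat) (P : 'M[R]_r) (x : vecN r) (l : seq 'I_r) :
  let D := foldr (fun i d => iter (x i) (Defs.convN (offspring n P i)) d)
             (dirac_at R (fun _ => 0%N)) l in
  supp_le D (fun j => \sum_(i <- l) x i * n j)%N /\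
  (forall k, (forall j, (\sum_(i <- l) x i * n j <= k)%N) ->
    box_pgf k.+1 D = \prod_(i <- l) box_pgf k.+1 (offspring n P i) ^+ x i).
Proof.
elim: l => [|i l [IHs IHp]] /=.
  split; first by move=> y hy j; rewrite big_nil; apply: supp_le_dirac0 hy j.
  by move=> k _; rewrite big_nil box_pgf_dirac0.
have [hs hp] := @iter_convN_offspring n P i _ _ (x i) IHs.
split; first by move=> y hy j; rewrite big_cons addnC; apply: hs.
move=> k hk; rewrite big_cons hp ?IHp //.
  by move=> j; apply: leq_trans (hk j); rewrite big_cons leq_addl.
by move=> j; have := hk j; rewrite big_cons addnC.
Qed.

Lemma box_pgf_children_le (n : 'I_r -> nat) (P : 'M[R]_r) (x : vecN r) k :
  (forall j, (\sum_i x i * n j <= k)%N) ->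
  (forall i, (0 < x i)%N -> 0 <= box_pgf k.+1 (offspring n P i) <= s i) ->
  box_pgf k.+1 (children n P x) <= monomial x.
Proof.
move=> hk hx.
have [_ hp] := @foldr_convN_offspring n P x (enum 'I_r).
rewrite /children hp; last by move=> j; rewrite big_enum.
rewrite big_enum /monomial; apply: ler_prod => i _.
case: (posnP (x i)) => [->|xi]; first by rewrite !expr0 lexx ler01.
have /andP[h0 h1] := hx i xi.
by rewrite exprn_ge0 //=; apply: lerXn2r; rewrite ?nnegrE ?(le_trans h0 h1).
Qed.

Lemma convN_ge0 (a d : massN R r) : (forall y, 0 <= a y) -> (forall y, 0 <= d y) ->
  forall y, 0 <= Defs.convN a d y.
Proof. by move=> ha hd y; apply: sumr_ge0 => u _; apply: mulr_ge0. Qed.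

Lemma offspring_ge0 (n : 'I_r -> nat) (P : 'M[R]_r) i :
  (forall j, 0 <= P i j <= 1) -> forall y, 0 <= offspring n P i y.
Proof.
move=> hP y; apply: prodr_ge0 => j _; have /andP[h0 h1] := hP j.
by rewrite !mulr_ge0 ?exprn_ge0 ?subr_ge0.
Qed.

Lemma children_ge0 (n : 'I_r -> nat) (P : 'M[R]_r) (x : vecN r) :
  (forall i j, 0 <= P i j <= 1) -> forall y, 0 <= children n P x y.
Proof.
move=> hP; rewrite /children; elim: (enum 'I_r) => [|i l IH] /=.
  by move=> y; rewrite /dirac_at; case: ifP.
elim: (x i) => [|m IHm] //= y.
by apply: convN_ge0 => // z; apply: offspring_ge0.
Qed.

Variables (n : 'I_r -> nat) (P : 'M[R]_r).
Hypothesis P01 : forall i j, 0 <= P i j <= 1.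
Hypothesis s_ge0 : forall i, 0 <= s i.
Hypothesis s_super : forall i, offspring_pgf n P i <= s i.

Lemma gw_law_zero_le_monomial t x : gw_law n P t x (fun _ => 0%N) <= monomial x.
Proof.
elim: t x => [|t IH] x /=.
  rewrite /dirac_at; case: ifP => [/forallP H|_]; last first.
    by apply: prodr_ge0 => i _; apply: exprn_ge0.
  by rewrite /monomial big1 // => i _; rewrite -(eqP (H i)) expr0.
have hb j : (\sum_i x i * n j <= child_bound n x)%N.
  rewrite /child_bound; apply: leq_sum => i _; rewrite leq_mul2l.
  by rewrite (leq_bigmax_cond (F := n) j) ?orbT.
have offspring_le i : (0 < x i)%N ->
    0 <= box_pgf (child_bound n x).+1 (offspring n P i) <= s i.
  move=> xi; rewrite box_pgf_offspring ?s_super ?andbT; last first.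
    move=> j; apply: leq_trans (hb j); rewrite (bigD1 i) //=.
    by apply: leq_trans (leq_addr _ _); rewrite leq_pmull.
  apply: prodr_ge0 => j _; apply: exprn_ge0.
  have /andP[h0 h1] := P01 i j.
  by rewrite addr_ge0 ?subr_ge0 // mulr_ge0.
apply: le_trans _ (box_pgf_children_le hb offspring_le).
by apply: ler_sum => z _; apply: ler_wpM2l; [apply: children_ge0 | apply: IH].
Qed.

Lemma gw_extinction_prob_le_monomial x : gw_extinction_prob n P x <= monomial x.
Proof.
rewrite /gw_extinction_prob.
case: (pselect (cvgn (fun t => gw_law n P t x (fun _ => 0%N)))) => hc.
  by apply: limr_le => //; near=> t; apply: gw_law_zero_le_monomial.
by rewrite (dvgP hc); apply: prodr_ge0 => i _; apply: exprn_ge0.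
Unshelve. all: by end_near.
Qed.

End GeneratingFunction.

Lemma monomial_unit_vecN (R : realType) r (s : 'I_r -> R) i : monomial s (unit_vecN i) = s i.
Proof.
rewrite /monomial (bigD1 i) //= big1 ?mulr1; first by rewrite /unit_vecN eqxx expr1.
by move=> j /negbTE ji; rewrite /unit_vecN ji expr0.
Qed.

Section Smoothing.
Variables (R : realType) (r : nat) (M : 'I_r -> 'I_r -> R).
Hypothesis M_ge0 : forall i j, 0 <= M i j.

Definition smooth (u : 'I_r -> R) : 'I_r -> R := fun i => u i + \sum_j M i j * u j.

Definition smooth_iter k (w : 'I_r -> R) := iter k smooth w.

Variable w : 'I_r -> R.
Hypothesis w_ge0 : forall j, 0 <= w j.

Lemma smooth_iter_ge0 k j : 0 <= smooth_iter k w j.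
Proof.
elim: k j => [|k IH] //= j.
by rewrite /smooth addr_ge0 // sumr_ge0 // => l _; rewrite mulr_ge0.
Qed.

Lemma smooth_iter_ge k j : w j <= smooth_iter k w j.
Proof.
elim: k j => [|k IH] j //=; apply: le_trans (IH j) _.
rewrite /smooth lerDl sumr_ge0 // => l _.
by rewrite mulr_ge0 ?smooth_iter_ge0.
Qed.

Lemma smooth_iter_super mu k : (forall i, mu * w i <= \sum_j M i j * w j) ->
  forall i, mu * smooth_iter k w i <= \sum_j M i j * smooth_iter k w j.
Proof.
move=> w_super; elim: k => [|k IH] //= i.
rewrite /smooth mulrDr; under eq_bigr => j _ do rewrite mulrDr.
rewrite big_split /= lerD ?IH // mulr_sumr; apply: ler_sum => j _.
by rewrite mulrCA; apply: ler_wpM2l => //; apply: IH.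
Qed.

Lemma smooth_iter_le C B k : (forall i j, M i j <= C) -> (forall j, w j <= B) ->
  forall i, smooth_iter k w i <= (1 + r%:R * C) ^+ k * B.
Proof.
move=> M_le w_le; elim: k => [|k IH] i /=; first by rewrite expr0 mul1r.
rewrite /smooth exprS -mulrA mulrDl mul1r lerD ?IH //.
have -> : r%:R * C * ((1 + r%:R * C) ^+ k * B) =
          \sum_(j < r) C * ((1 + r%:R * C) ^+ k * B).
  by rewrite sumr_const card_ord; ring.
by apply: ler_sum => j _; apply: ler_pM; rewrite ?smooth_iter_ge0.
Qed.

Variables (e : rel 'I_r) (g : R).
Hypotheses (g_ge0 : 0 <= g) (g_le1 : g <= 1) (M_ge_edge : forall a b, e a b -> g <= M a b).

Lemma smooth_iter_path p a k : path e a p -> (size p <= k)%N ->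
  g ^+ size p * w (last a p) <= smooth_iter k w a.
Proof.
elim: p a k => [|b p IH] a k /=; first by rewrite expr0 mul1r smooth_iter_ge.
case/andP=> eab pth; case: k => // k; rewrite ltnS => hk /=.
apply: (@le_trans _ _ (M a b * smooth_iter k w b)).
  by rewrite exprS -mulrA ler_pM ?mulr_ge0 ?exprn_ge0 ?M_ge_edge ?IH.
rewrite /smooth (bigD1 b) //= addrCA lerDl addr_ge0 ?smooth_iter_ge0 // sumr_ge0 // => j _.
by rewrite mulr_ge0 ?smooth_iter_ge0.
Qed.

Lemma smooth_iter_connect a b : connect e a b -> g ^+ r * w b <= smooth_iter r w a.
Proof.
case/connectP => p pth ->; case: (shortenP pth) => q qpth uq _.
have sz : (size q <= r)%N.
  by have := max_card (mem (a :: q)); rewrite (card_uniqP uq) card_ord => /ltnW.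
apply: le_trans _ (smooth_iter_path qpth sz).
by rewrite ler_wpM2r // ler_wiXn2l.
Qed.

Hypothesis e_connected : forall a b, connect e a b.

Lemma normalized_super_vector C mu :
  (forall a b, M a b <= C) -> (exists a, w a != 0) ->
  (forall a, mu * w a <= \sum_b M a b * w b) ->
  exists U : 'I_r -> R, [/\ forall a, 0 <= U a <= 1,
    forall a, (g / (1 + r%:R * C)) ^+ r <= U a
    & forall a, mu * U a <= \sum_b M a b * U b].
Proof.
move=> M_le [a0 wa0] w_super.
have [m _ w_le] := @arg_maxP _ _ _ a0 predT w isT.
have wm_gt0 : 0 < w m by apply: lt_le_trans (w_le a0 isT); rewrite lt0r wa0 w_ge0.
pose D := 1 + r%:R * C.
have D_gt0 : 0 < D by rewrite ltr_pwDl // mulr_ge0 // (le_trans (M_ge0 m m)).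
have Dm_gt0 : 0 < D ^+ r * w m by rewrite mulr_gt0 // exprn_gt0.
exists (fun a => smooth_iter r w a / (D ^+ r * w m)); split => a.
- rewrite divr_ge0 ?smooth_iter_ge0 ?(ltW Dm_gt0) //= ler_pdivrMr // mul1r.
  by apply: smooth_iter_le => // j; apply: w_le.
- rewrite ler_pdivlMr // mulrA -exprMn divfK ?lt0r_neq0 //.
  exact: smooth_iter_connect (e_connected a m).
- under eq_bigr => b _ do rewrite mulrA.
  rewrite -mulr_suml mulrA ler_pM2r ?invr_gt0 //.
  exact: smooth_iter_super.
Qed.

End Smoothing.

Lemma expR_Nmul_le_1_sub (R : realType) (c x : R) :
  0 <= x <= 1 -> 1 <= c * (1 - x) -> expR (- (c * x)) <= 1 - x.
Proof.
move=> /andP[x_ge0 x_le1] c1x.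
have c_gt0 : 0 < c by nra.
have cx_ge0 : 0 <= c * x := mulr_ge0 (ltW c_gt0) x_ge0.
have cx1_gt0 : 0 < 1 + c * x := ltr_pwDl ltr01 cx_ge0.
apply: (@le_trans _ _ (1 + c * x)^-1).
  by rewrite expRN lef_pV2 ?posrE ?expR_gt0 ?expR_ge1Dx.
rewrite -div1r ler_pdivrMr //; nra.
Qed.

Lemma offspring_pgf_1_sub_le (R : realType) r (n : 'I_r -> nat) (P : 'M[R]_r)
    (x : 'I_r -> R) mu a :
  (forall b, 0 <= P a b <= 1) -> (forall b, 0 <= x b <= 1) ->
  1 <= mu * (1 - x a) -> mu * x a <= \sum_b Mmx n P a b * x b ->
  offspring_pgf (fun b => 1 - x b) n P a <= 1 - x a.
Proof.
move=> P01 x01 mu1x mu_super.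
apply: le_trans (expR_Nmul_le_1_sub (x01 a) mu1x); rewrite /offspring_pgf.
apply: (@le_trans _ _ (\prod_b expR (- (P a b * x b)) ^+ n b)).
  apply: ler_prod => b _; have /andP[P_ge0 P_le1] := P01 b.
  have /andP[x_ge0 x_le1] := x01 b.
  have Px_le1 : P a b * x b <= 1 by rewrite mulr_ile1.
  rewrite -[1 - _ + _](_ : 1 - P a b * x b = _); last by ring.
  rewrite exprn_ge0 ?subr_ge0 //= lerXn2r ?nnegrE ?subr_ge0 ?expR_ge0 //.
  exact: expR_ge1Dx.
rewrite -(eq_bigr _ (fun b _ => expRM_natl _ _)) -expR_sum ler_expR.
have -> : \sum_b (n b)%:R * - (P a b * x b) = - \sum_b Mmx n P a b * x b.
  by rewrite -sumrN; apply: eq_bigr => b _; rewrite mxE; ring.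
by rewrite lerN2.
Qed.

Lemma gw_extinction_prob_le_super_vector (R : realType) r (n : 'I_r -> nat) (P : 'M[R]_r)
    (U : 'I_r -> R) eps mu :
  0 < eps -> 1 + eps <= mu -> (forall a b, 0 <= P a b <= 1) -> (forall a, 0 <= U a <= 1) ->
  (forall a, mu * U a <= \sum_b Mmx n P a b * U b) ->
  forall i, gw_extinction_prob n P (unit_vecN i) <= 1 - eps / (1 + eps) * U i.
Proof.
move=> eps_gt0 mu_ge P01 U01 U_super i.
pose x a := eps / (1 + eps) * U a.
have th_gt0 : 0 < eps / (1 + eps) by rewrite divr_gt0 // addr_gt0.
have x01 a : 0 <= x a <= 1.
  have /andP[U_ge0 U_le1] := U01 a.
  rewrite mulr_ge0 ?(ltW th_gt0) //= mulr_ile1 ?(ltW th_gt0) //.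
  by rewrite ler_pdivrMr ?addr_gt0 // mul1r lerDr ltW.
have mu_x a : 1 <= mu * (1 - x a).
  have /andP[_ x_le1] := x01 a; have /andP[_ U_le1] := U01 a.
  apply: le_trans (_ : 1 <= (1 + eps) * (1 - x a)) _; last by rewrite ler_wpM2r ?subr_ge0.
  have -> : (1 + eps) * (1 - x a) = 1 + eps * (1 - U a).
    by rewrite /x; field; rewrite lt0r_neq0 ?addr_gt0.
  by rewrite lerDl; apply: mulr_ge0; rewrite ?subr_ge0 ?(ltW eps_gt0).
have x_super a : mu * x a <= \sum_b Mmx n P a b * x b.
  rewrite /x mulrCA; under eq_bigr => b _ do rewrite mulrCA.
  by rewrite -mulr_sumr ler_pM2l.
have s_ge0 a : 0 <= 1 - x a by have /andP[_ x_le1] := x01 a; rewrite subr_ge0.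
rewrite -(monomial_unit_vecN (fun a => 1 - x a)).
exact: gw_extinction_prob_le_monomial P01 s_ge0
  (fun a => offspring_pgf_1_sub_le (P01 a) x01 (mu_x a) (x_super a)) _.
Qed.

Lemma eps_separated_le (R : realType) r (eps : R) (L : 'M[R]_r) :
  0 < eps -> eps_separated eps L -> forall a b, L a b <= eps^-1.
Proof. by move=> eps_gt0 L_sep a b; case: (L_sep a b) => [->|[]//]; rewrite invr_ge0 ltW. Qed.

Lemma eps_separated_ge (R : realType) r (eps : R) (L : 'M[R]_r) :
  eps_separated eps L -> forall a b, 0 < L a b -> eps <= L a b.
Proof. by move=> L_sep a b; case: (L_sep a b) => [->|[]//]; rewrite ltxx. Qed.

Section BalancedModel.
Variables (R : realType) (r A : nat) (n : 'I_r -> nat) (L : 'M[R]_r).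
Hypotheses (n_gt0 : forall i, (0 < n i)%N) (n_balanced : forall i j, (n i <= A * n j)%N).
Hypothesis L_ge0 : forall i j, 0 <= L i j.

Let q a b : R := Num.sqrt (n a * n b)%N%:R.

Let q_gt0 a b : 0 < q a b.
Proof. by rewrite sqrtr_gt0 ltr0n muln_gt0 !n_gt0. Qed.

Let sqr_q a b : q a b ^+ 2 = (n a * n b)%N%:R.
Proof. by rewrite sqr_sqrtr ?ler0n. Qed.

Lemma leq_of_balanced_sum K j : (r * A * K <= \sum_i n i)%N -> (K <= n j)%N.
Proof.
move=> sum_ge; have A_gt0 : (0 < A)%N by have := n_balanced j j; have := n_gt0 j; nia.
have r_gt0 : (0 < r)%N := leq_ltn_trans (leq0n j) (ltn_ord j).
have : (\sum_i n i <= \sum_(i < r) A * n j)%N by apply: leq_sum => i _.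
rewrite sum_nat_const card_ord mulnA => /(leq_trans sum_ge).
by rewrite leq_pmul2l // muln_gt0 r_gt0.
Qed.

Lemma Pmx_ge0 a b : 0 <= Pmx n L a b.
Proof. by rewrite mxE divr_ge0 ?sqrtr_ge0. Qed.

Lemma Pmx_le1 (K : nat) a b : (forall i, (K <= n i)%N) -> L a b <= K%:R -> Pmx n L a b <= 1.
Proof.
move=> n_ge L_le; rewrite mxE ler_pdivrMr -/(q a b) // mul1r.
apply: le_trans L_le _; rewrite -ler_sqr ?nnegrE ?ler0n ?(ltW (q_gt0 a b)) //.
by rewrite sqr_q -natrX ler_nat; have := n_ge a; have := n_ge b; nia.
Qed.

Lemma Mmx_Pmx_ge0 a b : 0 <= Mmx n (Pmx n L) a b.
Proof. by rewrite mxE mulr_ge0 ?Pmx_ge0. Qed.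

Let Mmx_PmxE a b : Mmx n (Pmx n L) a b = (n b)%:R / q a b * L a b.
Proof. by rewrite !mxE; ring. Qed.

Lemma Mmx_Pmx_le C a b : L a b <= C -> Mmx n (Pmx n L) a b <= A.+1%:R * C.
Proof.
move=> L_le; rewrite Mmx_PmxE; apply: ler_pM => //.
  by rewrite divr_ge0 ?ler0n ?(ltW (q_gt0 a b)).
rewrite ler_pdivrMr // -ler_sqr ?nnegrE ?mulr_ge0 ?ler0n ?(ltW (q_gt0 a b)) //.
by rewrite exprMn sqr_q -!natrX -natrM ler_nat; have := n_balanced b a; nia.
Qed.

Lemma Mmx_Pmx_ge c a b : 0 <= c -> c <= L a b -> c / A.+1%:R <= Mmx n (Pmx n L) a b.
Proof.
move=> c_ge0 L_ge; rewrite Mmx_PmxE mulrC; apply: ler_pM => //.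
rewrite ler_pdivlMr // mulrC ler_pdivrMr // -ler_sqr ?nnegrE ?mulr_ge0 ?ler0n ?(ltW (q_gt0 a b)) //.
by rewrite exprMn sqr_q -!natrX -natrM ler_nat; have := n_balanced a b; nia.
Qed.

Lemma eigenvalue_Mmx_Pmx_super mu : L^T = L -> 0 <= mu ->
  eigenvalue (Mmx n (Pmx n L)) mu ->
  exists w : 'I_r -> R, [/\ forall a, 0 <= w a, exists a, w a != 0
    & forall a, mu * w a <= \sum_b Mmx n (Pmx n L) a b * w b].
Proof.
move=> L_sym mu_ge0 /eigenvalueP [v vM v_neq0].
have L_symE a b : L b a = L a b by rewrite -[in RHS]L_sym mxE.
pose y a := v 0 a / (n a)%:R.
have y_eigen a : \sum_b Mmx n (Pmx n L) a b * y b = mu * y a.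
  have := congr1 (fun m : 'rV_r => m 0 a) vM; rewrite /= !mxE => v_eigen.
  rewrite /y mulrA -v_eigen mulr_suml; apply: eq_bigr => b _; rewrite !mxE L_symE mulnC.
  by field; rewrite !pnatr_eq0 -!lt0n !n_gt0 sqrtr_eq0 -ltNge ltr0n muln_gt0 !n_gt0.
exists (fun a => `|y a|); split.
- by move=> a; rewrite normr_ge0.
- have [a va] : exists a, v 0 a != 0.
    apply/existsP; apply: contraNT v_neq0 => /existsPn v0.
    by apply/eqP/rowP => a; rewrite mxE; apply/eqP/negPn/v0.
  by exists a; rewrite normr_eq0 mulf_neq0 // invr_eq0 pnatr_eq0 -lt0n.
- move=> a; rewrite -[mu]ger0_norm // -normrM -y_eigen.
  apply: le_trans (ler_norm_sum _ _ _) _; apply: ler_sum => b _.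
  by rewrite normrM ger0_norm ?Mmx_Pmx_ge0.
Qed.

Lemma Mmx_Pmx_normalized_super_vector eps mu :
  0 < eps -> L^T = L -> mx_connected L -> eps_separated eps L -> 0 <= mu ->
  eigenvalue (Mmx n (Pmx n L)) mu ->
  exists U : 'I_r -> R, [/\ forall a, 0 <= U a <= 1,
    forall a, (eps / (A.+1%:R + eps) / (1 + r%:R * (A.+1%:R / eps))) ^+ r <= U a
    & forall a, mu * U a <= \sum_b Mmx n (Pmx n L) a b * U b].
Proof.
move=> eps_gt0 L_sym L_conn L_sep mu_ge0 eig.
have A1_gt0 : 0 < A.+1%:R :> R by rewrite ltr0n.
have [w [w_ge0 w_nz w_super]] := eigenvalue_Mmx_Pmx_super L_sym mu_ge0 eig.
have g_gt0 : 0 < eps / (A.+1%:R + eps) by rewrite divr_gt0 // addr_gt0.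
have g_le1 : eps / (A.+1%:R + eps) <= 1 by rewrite ler_pdivrMr ?addr_gt0 // mul1r lerDr ltW.
have M_edge a b : 0 < L a b -> eps / (A.+1%:R + eps) <= Mmx n (Pmx n L) a b.
  move=> /(eps_separated_ge L_sep) L_ge.
  apply: le_trans _ (Mmx_Pmx_ge (ltW eps_gt0) L_ge).
  by rewrite ler_pM2l // lef_pV2 ?posrE ?addr_gt0 // lerDl ltW.
have M_le a b : Mmx n (Pmx n L) a b <= A.+1%:R / eps.
  exact: Mmx_Pmx_le (eps_separated_le eps_gt0 L_sep a b).
have := normalized_super_vector Mmx_Pmx_ge0 w_ge0 (ltW g_gt0) g_le1 M_edge L_conn.
by move/(_ _ _ M_le w_nz w_super).
Qed.

End BalancedModel.

Theorem lemma3p1 (R : realType) (eps : R) (A r : nat) :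
  0 < eps ->
  exists (delta : R) (N : nat), 0 < delta /\
  forall (n : 'I_r -> nat) (L : 'M[R]_r),
    (forall i, (0 < n i)%N) ->
    (forall i j, (n i <= A * n j)%N) ->
    (N <= \sum_(i < r) n i)%N ->
    L^T = L ->
    (forall i j, 0 <= L i j) ->
    mx_connected L ->
    eps_separated eps L ->
    (exists mu : R, eigenvalue (Mmx n (Pmx n L)) mu /\ 1 + eps <= mu) ->
    forall i : 'I_r,
      gw_extinction_prob n (Pmx n L) (unit_vecN i) <= 1 - delta.
Proof.
move=> eps_gt0.
pose c := eps / (A.+1%:R + eps) / (1 + r%:R * (A.+1%:R / eps)).
pose K := Num.Def.archi_bound eps^-1.
have c_gt0 : 0 < c.
  apply: divr_gt0; first by rewrite divr_gt0 // addr_gt0.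
  by rewrite ltr_pwDl // mulr_ge0 // divr_ge0 // ltW.
exists (eps / (1 + eps) * c ^+ r), (r * A * K)%N; split.
  by apply: mulr_gt0; [rewrite divr_gt0 // addr_gt0 | rewrite exprn_gt0].
move=> n L n_gt0 n_bal sum_ge L_sym L_ge0 L_conn L_sep [mu [eig mu_ge]] i.
have mu_ge0 : 0 <= mu by apply: le_trans mu_ge; rewrite addr_ge0 // ltW.
have P01 a b : 0 <= Pmx n L a b <= 1.
  rewrite Pmx_ge0 //= (Pmx_le1 n_gt0 (fun j => leq_of_balanced_sum n_gt0 n_bal j sum_ge)) //.
  apply: le_trans (eps_separated_le eps_gt0 L_sep a b) (ltW (archi_boundP _)).
  by rewrite invr_ge0 ltW.
have [U [U01 U_ge U_super]] :=
  Mmx_Pmx_normalized_super_vector n_gt0 n_bal L_ge0 eps_gt0 L_sym L_conn L_sep mu_ge0 eig.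
apply: le_trans (gw_extinction_prob_le_super_vector eps_gt0 mu_ge P01 U01 U_super i) _.
by rewrite lerD2l lerN2 ler_pM2l ?divr_gt0 ?addr_gt0 ?U_ge.
Qed.
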